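(* Let $n,t'$ be positive integers and $\sigma\in\mathcal{S}_{n+t'}$. Then the symbol $n+t'+1$ can be inserted at some position of $\sigma$ to obtain a permutation $\sigma'\in\mathcal{S}_{n+t'+1}$ such that $\sum_{i=1}^{t'+1}\sigma'^{-1}(n+i)\equiv 0\pmod{n+1}$.
   Context: $\mathcal{S}_N$ is the set of permutations of $[N]=\{1,\ldots,N\}$ written as sequences; $\sigma'^{-1}(k)$ denotes the position of the value $k$ in $\sigma'$. *)

From mathcomp Require Import all_boot.
Set Implicit Arguments. Unset Strict Implicit. Unset Printing Implicit Defensive.

(* A permutation of [N] = {1,...,N} written as a sequence (one-line notation). *)
Definition is_perm_seq (N : nat) (s : seq nat) : Prop := perm_eq s (iota 1 N).

(* Insert the symbol x into s so that it lands right after the first k entries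
   (i.e. at 1-based position k+1), 0 <= k <= size s. *)
Definition insert_at (k : nat) (x : nat) (s : seq nat) : seq nat :=
  take k s ++ x :: drop k s.

(* 1-based position of the value v in s (sigma^{-1}(v)). *)
Definition pos (s : seq nat) (v : nat) : nat := (index v s).+1.

From mathcomp Require Import all_boot.
From mathcomp Require Import zify.

(* Insert N+1 into sigma right after its first k entries.  The positions of
   n+1, ..., n+t' then sum to a constant plus g(k) = k + #{i | k <= index of
   n+i in sigma}.  As k runs from 0 to N = n+t', g goes from t' to N in steps
   of 0 or 1, so it takes every value of the n+1 consecutive integers
   t', ..., t'+n, one of which makes the total divisible by n+1. *)

Lemma perm_insert_at k x (s : seq nat) : perm_eq (insert_at k x s) (x :: s).
Proof.
by rewrite /insert_at -[in X in perm_eq _ X](cat_take_drop k s) -cat1s perm_catCA.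
Qed.

Lemma is_perm_seq_insert_at N k s :
  is_perm_seq N s -> is_perm_seq N.+1 (insert_at k N.+1 s).
Proof.
move=> hs; rewrite /is_perm_seq (perm_trans (perm_insert_at k N.+1 s)) //.
have -> : iota 1 N.+1 = iota 1 N ++ [:: N.+1] by rewrite -(addn1 N) iotaD addnC.
by rewrite perm_sym perm_catC perm_cons perm_sym.
Qed.

Lemma index_insert_at k x s v : k <= size s -> v != x ->
  index v (insert_at k x s) = index v s + (k <= index v s).
Proof.
move=> ks vx; have szk : size (take k s) = k by rewrite size_takel.
have -> : index v s = if v \in take k s then index v (take k s)
                      else k + index v (drop k s).
  by rewrite -{1}(cat_take_drop k s) index_cat szk.
rewrite /insert_at index_cat /= eq_sym (negbTE vx) szk.
case: ifP => [v_take | _]; last by rewrite leq_addr addn1 addnS.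
have : index v (take k s) < k by rewrite -[X in _ < X]szk index_mem.
by rewrite ltnNge => /negbTE->; rewrite addn0.
Qed.

Lemma pos_insert_at_new k x s : k <= size s -> x \notin s ->
  pos (insert_at k x s) x = k.+1.
Proof.
move=> ks xs; rewrite /pos /insert_at index_cat /= eqxx addn0 size_takel //.
by case: ifP => // /mem_take; rewrite (negbTE xs).
Qed.

Lemma sum_pos_insert_at k x s vs : k <= size s -> x \notin vs ->
  \sum_(v <- vs) pos (insert_at k x s) v
    = \sum_(v <- vs) pos s v + count (fun v => k <= index v s) vs.
Proof.
move=> ks; elim: vs => [|v vs IH]; first by rewrite !big_nil.
rewrite inE negb_or => /andP[/negbTE xv /IH {}IH].
rewrite !big_cons /= IH /pos index_insert_at // 1?eq_sym ?xv //.
by rewrite !addSn -!addnA (addnCA (_ <= _)).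
Qed.

Definition insertion_shift (s vs : seq nat) (k : nat) : nat :=
  count (fun v => k <= index v s) vs + k.

Lemma insertion_shift0 s vs : insertion_shift s vs 0 = size vs.
Proof. by rewrite /insertion_shift addn0 -(count_predT vs); apply: eq_count. Qed.

Lemma insertion_shift_size s vs : {subset vs <= s} ->
  insertion_shift s vs (size s) = size s.
Proof.
move=> vs_s; rewrite /insertion_shift -[RHS]add0n; congr (_ + _).
rewrite -(count_pred0 vs); apply: eq_in_count => v /vs_s.
by rewrite -index_mem ltnNge => /negbTE.
Qed.

Lemma insertion_shiftS s vs k :
  insertion_shift s vs k.+1 <= (insertion_shift s vs k).+1.
Proof. by rewrite /insertion_shift addnS ltnS leq_add2r sub_count // => v /ltnW. Qed.

Lemma discrete_ivt (g : nat -> nat) b m :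
  (forall k, g k.+1 <= (g k).+1) -> g 0 <= m <= g b ->
  exists2 k, k <= b & g k = m.
Proof.
move=> gS; elim: b => [|b IH] /andP[g0m mgb]; first by exists 0 => //; lia.
have [mgb' | gbm] := leqP m (g b); last by exists b.+1 => //; have := gS b; lia.
by have [|k kb gk] := IH; [rewrite g0m | exists k => //; lia].
Qed.

Lemma dvdn_add_window c a [d] : 0 < d -> exists2 v, a <= v < a + d & d %| c + v.
Proof.
(* v is the least multiple of d that is at least c + a, minus c. *)
move=> d_gt0; exists ((c + a + d.-1) %/ d * d - c); last first.
  by rewrite subnKC ?dvdn_mull //; have := leq_divM (c + a + d.-1) d; lia.
have := divn_eq (c + a + d.-1) d; have := ltn_pmod (c + a + d.-1) d_gt0; lia.
Qed.

Theorem lemma7 (n t' : nat) (sigma : seq nat) :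
  0 < n -> 0 < t' -> is_perm_seq (n + t') sigma ->
  exists k : nat, k <= n + t' /\
    let sigma' := insert_at k (n + t').+1 sigma in
    is_perm_seq (n + t').+1 sigma' /\
    \sum_(1 <= i < t'.+2) pos sigma' (n + i) = 0 %[mod n.+1].
Proof.
move=> _ _ hp; set N := n + t'.
set vs := [seq n + i | i <- index_iota 1 t'.+1].
have sz_sigma : size sigma = N by rewrite (perm_size hp) size_iota.
have mem_sigma v : (v \in sigma) = (0 < v <= N).
  by rewrite (perm_mem hp) mem_iota; lia.
have sz_vs : size vs = t' by rewrite size_map size_iota; lia.
have vs_sigma : {subset vs <= sigma}.
  by move=> v /mapP[i]; rewrite mem_index_iota => i_t' ->; rewrite mem_sigma; lia.
have new_vs : N.+1 \notin vs by apply: contra (vs_sigma _) _; rewrite mem_sigma; lia.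
pose S := (\sum_(v <- vs) pos sigma v).+1.
have [v /andP[t'_v v_N] dvd_v] := dvdn_add_window S t' (ltn0Sn n).
have [k k_N shift_k] : exists2 k, k <= N & insertion_shift sigma vs k = v.
  apply: discrete_ivt; first exact: insertion_shiftS.
  by rewrite insertion_shift0 -sz_sigma insertion_shift_size // sz_vs sz_sigma /N; lia.
exists k; split=> //; split=> /=; first exact: is_perm_seq_insert_at.
rewrite big_nat_recr //= -(big_map (addn n) predT) -/vs.
have -> : n + t'.+1 = N.+1 by rewrite addnS.
rewrite sum_pos_insert_at ?pos_insert_at_new ?sz_sigma ?mem_sigma ?ltnn ?andbF //.
move: dvd_v; rewrite -shift_k /insertion_shift /S -/vs => /eqP.
by rewrite mod0n addnS addSn !addnA.
Qed.
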